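(* For every strongly normalising $\lambda\mu$-term $M$ there exist a basis $\Gamma$, a name context $\Delta$ and a type $\delta\in\mathcal{T}_D$ such that $\Gamma\vdash M:\delta\mid\Delta$ is derivable in the intersection type system described in the context.
   Context: $\lambda\mu$-calculus (Parigot). Fix disjoint denumerable sets of term variables $x,y,\dots$ and names $\alpha,\beta,\dots$. Terms and commands: $M,N ::= x \mid \lambda x.M \mid MN \mid \mu\alpha.C$ and $C ::= [\alpha]M$; $\lambda$ binds $x$, $\mu$ binds $\alpha$; terms are taken up to renaming of bound variables/names, with bound and free variables/names assumed distinct. $M[N/x]$ is capture-avoiding substitution. Structural substitution $T[\alpha \Leftarrow L]$ ($T$ a term or command): $([\alpha]M)[\alpha\Leftarrow L] = [\alpha](M[\alpha\Leftarrow L])L$; $([\beta]M)[\alpha\Leftarrow L]=[\beta](M[\alpha\Leftarrow L])$ if $\beta\neq\alpha$; $(\mu\beta.C)[\alpha\Leftarrow L]=\mu\beta.(C[\alpha\Leftarrow L])$; $x[\alpha\Leftarrow L]=x$; $(\lambda x.M)[\alpha\Leftarrow L]=\lambda x.(M[\alpha\Leftarrow L])$; $(MN)[\alpha\Leftarrow L]=(M[\alpha\Leftarrow L])(N[\alpha\Leftarrow L])$. Reduction $\to$ is the compatible closure of $(\lambda x.M)N \to M[N/x]$ and $(\mu\beta.C)N \to \mu\beta.(C[\beta\Leftarrow N])$. A term is strongly normalising if it admits no infinite reduction sequence. Types. With a single type constant $\nu$ and a symbol $\omega$ (which is not itself a type): $\mathcal{T}_D:\ \delta ::= \nu \mid \omega\to\nu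 \mid \kappa\to\nu \mid \delta\wedge\delta$; $\mathcal{T}_C:\ \kappa ::= \delta\times\omega \mid \delta\times\kappa \mid \kappa\wedge\kappa$ ($\times$ associates to the right). The relations $\le$ on $\mathcal{T}_D$ and on $\mathcal{T}_C$ are the least preorders such that: $\sigma\wedge\tau\le\sigma$; $\sigma\wedge\tau\le\tau$; $\nu\le\omega\to\nu$; $\omega\to\nu\le\nu$; $\delta_1\times\delta_2\times\omega\le\delta_1\times\omega$; $(\delta_1\times\omega)\wedge(\delta_2\times\kappa)\le(\delta_1\wedge\delta_2)\times\kappa$; $(\delta_1\times\kappa_1)\wedge(\delta_2\times\kappa_2)\le(\delta_1\wedge\delta_2)\times(\kappa_1\wedge\kappa_2)$; if $\delta_1\le\delta_2$ then $\delta_1\times\omega\le\delta_2\times\omega$; if $\delta_1\le\delta_2$ and $\kappa_1\le\kappa_2$ then $\delta_1\times\kappa_1\le\delta_2\times\kappa_2$; if $\sigma\le\tau_1$ and $\sigma\le\tau_2$ then $\sigma\le\tau_1\wedge\tau_2$; if $\kappa_2\le\kappa_1$ then $\kappa_1\to\nu\le\kappa_2\to\nu$. Typing. A basis $\Gamma$ is a finite map from term variables to $\mathcal{T}_D$, a name context $\Delta$ a finite map from names to $\mathcal{T}_C$; judgements are $\Gamma\vdash M:\delta\mid\Delta$, with the convention that variables of $\Gamma$ and names of $\Delta$ do not occur bound in $M$. Rules: (ax) $\Gamma,x{:}\delta\vdash x:\delta\mid\Delta$; (abs) from $\Gamma,x{:}\delta\vdash M:\kappa\to\nu\mid\Delta$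 infer $\Gamma\vdash\lambda x.M:\delta\times\kappa\to\nu\mid\Delta$; (app) from $\Gamma\vdash M:\delta\times\kappa\to\nu\mid\Delta$ and $\Gamma\vdash N:\delta\mid\Delta$ infer $\Gamma\vdash MN:\kappa\to\nu\mid\Delta$ (in (abs) and (app), $\kappa$ is either in $\mathcal{T}_C$ or is $\omega$); ($\mu$) from $\Gamma\vdash M:\kappa'\to\nu\mid\alpha{:}\kappa,\beta{:}\kappa',\Delta$ infer $\Gamma\vdash\mu\alpha.[\beta]M:\kappa\to\nu\mid\beta{:}\kappa',\Delta$ (for $\beta\ne\alpha$), and from $\Gamma\vdash M:\kappa\to\nu\mid\alpha{:}\kappa,\Delta$ infer $\Gamma\vdash\mu\alpha.[\alpha]M:\kappa\to\nu\mid\Delta$; ($\le$) from $\Gamma\vdash M:\delta\mid\Delta$ and $\delta\le\delta'$ infer $\Gamma\vdash M:\delta'\mid\Delta$; ($\wedge$) from $\Gamma\vdash M:\delta\mid\Delta$ and $\Gamma\vdash M:\delta'\mid\Delta$ infer $\Gamma\vdash M:\delta\wedge\delta'\mid\Delta$. *)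

From Stdlib Require Import Arith List.
Import ListNotations.

(* Term variables and names are two independent de Bruijn index
   spaces.  [Lam M] binds term variable 0 in M; [Mu b M] is mu alpha.[b]M,
   where the mu binds name 0 in the command [b]M (so b = 0 means the
   command name is the bound alpha). *)
Inductive term : Type :=
| Var : nat -> term
| Lam : term -> term
| App : term -> term -> term
| Mu  : nat -> term -> term.

Fixpoint lift_t (k : nat) (M : term) : term :=
  match M with
  | Var n => Var (if n <? k then n else S n)
  | Lam P => Lam (lift_t (S k) P)
  | App P Q => App (lift_t k P) (lift_t k Q)
  | Mu b P => Mu b (lift_t k P)
  end.

Fixpoint lift_n (k : nat) (M : term) : term :=
  match M with
  | Var n => Var n
  | Lam P => Lam (lift_n k P)
  | App P Q => App (lift_n k P) (lift_n k Q)
  | Mu b P => Mu (if b <? S k then b else S b) (lift_n (S k) P)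
  end.

(* capture-avoiding substitution M[N/k] (removing variable k) *)
Fixpoint subst_t (k : nat) (N M : term) : term :=
  match M with
  | Var n => if n =? k then N else if n <? k then Var n else Var (pred n)
  | Lam P => Lam (subst_t (S k) (lift_t 0 N) P)
  | App P Q => App (subst_t k N P) (subst_t k N Q)
  | Mu b P => Mu b (subst_t k (lift_n 0 N) P)
  end.

(* structural substitution M[k <= N]: every command [k]P becomes [k](P')N *)
Fixpoint ssubst (k : nat) (N M : term) : term :=
  match M with
  | Var n => Var n
  | Lam P => Lam (ssubst k (lift_t 0 N) P)
  | App P Q => App (ssubst k N P) (ssubst k N Q)
  | Mu b P =>
      let N' := lift_n 0 N in
      let P' := ssubst (S k) N' P in
      if b =? S k then Mu b (App P' N') else Mu b P'
  end.

Inductive step : term -> term -> Prop :=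
| st_beta : forall M N, step (App (Lam M) N) (subst_t 0 N M)
| st_mu : forall b P N,
    step (App (Mu b P) N)
         (let N' := lift_n 0 N in
          let P' := ssubst 0 N' P in
          if b =? 0 then Mu b (App P' N') else Mu b P')
| st_lam : forall M M', step M M' -> step (Lam M) (Lam M')
| st_appl : forall M M' N, step M M' -> step (App M N) (App M' N)
| st_appr : forall M N N', step N N' -> step (App M N) (App M N')
| st_mu_body : forall b M M', step M M' -> step (Mu b M) (Mu b M').

Definition SN (M : term) : Prop :=
  ~ exists f : nat -> term, f 0 = M /\ forall n, step (f n) (f (S n)).

Inductive tD : Type :=
| Nu : tD
| OmArr : tD                   (* omega -> nu *)
| KArr : tC -> tD              (* kappa -> nu *)
| DAnd : tD -> tD -> tD
with tC : Type :=
| PairO : tD -> tC             (* delta x omega *)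
| Pair : tD -> tC -> tC        (* delta x kappa *)
| CAnd : tC -> tC -> tC.

(* "kappa in T_C or omega" is encoded as option tC (None = omega) *)
Definition arr (ko : option tC) : tD :=
  match ko with None => OmArr | Some k => KArr k end.
Definition times (d : tD) (ko : option tC) : tC :=
  match ko with None => PairO d | Some k => Pair d k end.

Inductive leD : tD -> tD -> Prop :=
| leD_refl : forall d, leD d d
| leD_trans : forall d1 d2 d3, leD d1 d2 -> leD d2 d3 -> leD d1 d3
| leD_andl : forall s t, leD (DAnd s t) s
| leD_andr : forall s t, leD (DAnd s t) t
| leD_nu_om : leD Nu OmArr
| leD_om_nu : leD OmArr Nu
| leD_glb : forall s t1 t2, leD s t1 -> leD s t2 -> leD s (DAnd t1 t2)
| leD_arr : forall k1 k2, leC k2 k1 -> leD (KArr k1) (KArr k2)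
with leC : tC -> tC -> Prop :=
| leC_refl : forall k, leC k k
| leC_trans : forall k1 k2 k3, leC k1 k2 -> leC k2 k3 -> leC k1 k3
| leC_andl : forall s t, leC (CAnd s t) s
| leC_andr : forall s t, leC (CAnd s t) t
| leC_drop : forall d1 d2, leC (Pair d1 (PairO d2)) (PairO d1)
| leC_andO : forall d1 d2 k,
    leC (CAnd (PairO d1) (Pair d2 k)) (Pair (DAnd d1 d2) k)
| leC_andP : forall d1 d2 k1 k2,
    leC (CAnd (Pair d1 k1) (Pair d2 k2)) (Pair (DAnd d1 d2) (CAnd k1 k2))
| leC_PairO : forall d1 d2, leD d1 d2 -> leC (PairO d1) (PairO d2)
| leC_Pair : forall d1 d2 k1 k2,
    leD d1 d2 -> leC k1 k2 -> leC (Pair d1 k1) (Pair d2 k2)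
| leC_glb : forall s t1 t2, leC s t1 -> leC s t2 -> leC s (CAnd t1 t2).

(* Bases and name contexts: finite partial maps, represented positionally
   (index i of the list = de Bruijn index i; None = not in the domain). *)
Definition basis := list (option tD).
Definition nctx := list (option tC).

Inductive typ : basis -> term -> tD -> nctx -> Prop :=
| t_ax : forall G D x d, nth x G None = Some d -> typ G (Var x) d D
| t_abs : forall G D M d ko,
    typ (Some d :: G) M (arr ko) D -> typ G (Lam M) (KArr (times d ko)) D
| t_app : forall G D M N d ko,
    typ G M (KArr (times d ko)) D -> typ G N d D -> typ G (App M N) (arr ko) D
| t_mu1 : forall G D M b k k',
    nth b D None = Some k' ->
    typ G M (KArr k') (Some k :: D) -> typ G (Mu (S b) M) (KArr k) D
| t_mu2 : forall G D M k,
    typ G M (KArr k) (Some k :: D) -> typ G (Mu 0 M) (KArr k) D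
| t_le : forall G D M d d', typ G M d D -> leD d d' -> typ G M d' D
| t_and : forall G D M d d',
    typ G M d D -> typ G M d' D -> typ G M (DAnd d d') D.

(* Induction on the order generated by reduction and the immediate-subterm
   relation, which is well founded on strongly normalising terms.  Abstractions
   and mu-abstractions are typed from their bodies; variable-headed (neutral) terms
   receive every arrow type, so they can be applied to any typable argument; a term
   whose head is a redex is typed through its head reduct by subject expansion.  A
   typing of [M[N/x]] (resp. [M[a <= N]]) splits into a typing of [M] in which [x]
   (resp. the continuation [a]) receives the types of the occurrences of [N].  If
   [N] is erased it has no occurrence and must be typed on its own: hence the
   argument of the head redex, a subterm, has to be typable, and expansion only
   holds after refining the contexts by meets. *)
From Stdlib Require Import Arith List Lia Classical ClassicalEpsilon Relations Transitive_Closure.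
Import ListNotations.

Section Contexts.
Variable X : Type.
Implicit Types (o : option X) (l : list (option X)).

Definition opt_meet (meet : X -> X -> X) (x y : option X) : option X :=
  match x, y with
  | Some a, Some b => Some (meet a b)
  | Some a, None => Some a
  | None, y => y
  end.

Definition meet_with (meet : X -> X -> X) (o : option X) (a : X) : X :=
  match o with Some b => meet b a | None => a end.

Fixpoint ctx_meet meet l1 l2 : list (option X) :=
  match l1, l2 with
  | [], l => l
  | x :: l1', [] => x :: l1'
  | x :: l1', y :: l2' => opt_meet meet x y :: ctx_meet meet l1' l2'
  end.

Fixpoint ctx_insert k o l : list (option X) :=
  match k, l with
  | 0, l => o :: l
  | S k, [] => None :: ctx_insert k o []
  | S k, x :: l => x :: ctx_insert k o l
  end.

Fixpoint ctx_update k o l : list (option X) :=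
  match k, l with
  | 0, [] => [o]
  | 0, _ :: l => o :: l
  | S k, [] => None :: ctx_update k o []
  | S k, x :: l => x :: ctx_update k o l
  end.

Fixpoint ctx_delete k l : list (option X) :=
  match k, l with
  | 0, l => tl l
  | S k, [] => []
  | S k, x :: l => x :: ctx_delete k l
  end.

Lemma nth_nil_None i : nth i (@nil (option X)) None = None.
Proof. now destruct i. Qed.

Lemma nth_ctx_meet meet l1 l2 i :
  nth i (ctx_meet meet l1 l2) None = opt_meet meet (nth i l1 None) (nth i l2 None).
Proof.
  revert l2 i; induction l1 as [|x l1 IH]; intros [|y l2] [|i]; simpl;
    rewrite ?nth_nil_None; auto.
  - now destruct x.
  - now destruct (nth i l1 None).
Qed.

Lemma nth_ctx_insert k o l i :
  nth i (ctx_insert k o l) None =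
  if i <? k then nth i l None else if i =? k then o else nth (pred i) l None.
Proof.
  revert l i; induction k as [|k IH]; intros l [|i]; destruct l; simpl; auto.
  all: rewrite IH; change (S i <? S k) with (i <? k);
    destruct (i <? k) eqn:Hlt; rewrite ?nth_nil_None; auto;
    destruct (i =? k) eqn:Heq; auto;
    apply Nat.ltb_ge in Hlt; apply Nat.eqb_neq in Heq; destruct i; auto; lia.
Qed.

Lemma nth_ctx_update k o l i :
  nth i (ctx_update k o l) None = if i =? k then o else nth i l None.
Proof.
  revert l i; induction k as [|k IH]; intros l [|i]; destruct l; simpl;
    rewrite ?IH, ?nth_nil_None; auto.
  all: destruct i; reflexivity.
Qed.

Lemma nth_ctx_delete k l i :
  nth i (ctx_delete k l) None = nth (if i <? k then i else S i) l None.
Proof.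
  revert l i; induction k as [|k IH]; intros l [|i]; destruct l; simpl;
    rewrite ?IH, ?nth_nil_None; auto.
  all: change (S i <? S k) with (i <? k); now destruct (i <? k).
Qed.

Section Refinement.
Variables (le : X -> X -> Prop) (meet : X -> X -> X).
Hypotheses (le_refl : forall a, le a a)
           (le_trans : forall a b c, le a b -> le b c -> le a c)
           (meet_lb_l : forall a b, le (meet a b) a)
           (meet_lb_r : forall a b, le (meet a b) b).

Definition opt_le (x' x : option X) : Prop :=
  forall a, x = Some a -> exists a', x' = Some a' /\ le a' a.

Definition ctx_le (l' l : list (option X)) : Prop :=
  forall i, opt_le (nth i l' None) (nth i l None).

Lemma opt_le_refl x : opt_le x x.
Proof. intros a ->; eauto. Qed.

Lemma opt_le_trans x y z : opt_le x y -> opt_le y z -> opt_le x z.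
Proof.
  intros Hxy Hyz a Ha.
  destruct (Hyz a Ha) as [b [Hb Hba]], (Hxy b Hb) as [c [Hc Hcb]]; eauto.
Qed.

Lemma opt_le_None x : opt_le x None.
Proof. discriminate. Qed.

Lemma opt_le_Some a' a : le a' a -> opt_le (Some a') (Some a).
Proof. intros H b [= <-]; eauto. Qed.

Lemma opt_meet_le_l x y : opt_le (opt_meet meet x y) x.
Proof. intros a ->; destruct y; simpl; eauto. Qed.

Lemma opt_meet_le_r x y : opt_le (opt_meet meet x y) y.
Proof. intros a ->; destruct x; simpl; eauto. Qed.

Lemma meet_with_le o a : le (meet_with meet o a) a.
Proof. destruct o; simpl; auto. Qed.

Lemma meet_with_opt_le o a : opt_le (Some (meet_with meet o a)) o.
Proof. intros b ->; simpl; eauto. Qed.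

Lemma ctx_le_refl l : ctx_le l l.
Proof. intro; apply opt_le_refl. Qed.

Lemma ctx_le_trans l1 l2 l3 : ctx_le l1 l2 -> ctx_le l2 l3 -> ctx_le l1 l3.
Proof. intros H12 H23 i; eapply opt_le_trans; eauto. Qed.

Lemma ctx_meet_le_l l1 l2 : ctx_le (ctx_meet meet l1 l2) l1.
Proof. intro i; rewrite nth_ctx_meet; apply opt_meet_le_l. Qed.

Lemma ctx_meet_le_r l1 l2 : ctx_le (ctx_meet meet l1 l2) l2.
Proof. intro i; rewrite nth_ctx_meet; apply opt_meet_le_r. Qed.

Lemma ctx_le_cons x' x l' l : opt_le x' x -> ctx_le l' l -> ctx_le (x' :: l') (x :: l).
Proof. intros Hx Hl [|i]; [exact Hx | exact (Hl i)]. Qed.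

Lemma ctx_le_cons_tl x l' l : opt_le x (nth 0 l None) -> ctx_le l' (tl l) -> ctx_le (x :: l') l.
Proof.
  intros Hx Hl [|i]; [exact Hx|].
  destruct l as [|y l]; [destruct i; apply opt_le_None | exact (Hl i)].
Qed.

Lemma ctx_le_insert k o' o l' l :
  opt_le o' o -> ctx_le l' l -> ctx_le (ctx_insert k o' l') (ctx_insert k o l).
Proof. intros Ho Hl i; rewrite !nth_ctx_insert; now destruct (i <? k), (i =? k). Qed.

Lemma ctx_le_update k o' o l' l :
  opt_le o' o -> ctx_le l' l -> ctx_le (ctx_update k o' l') (ctx_update k o l).
Proof. intros Ho Hl i; rewrite !nth_ctx_update; now destruct (i =? k). Qed.

Lemma ctx_le_update_nth k o l : opt_le o (nth k l None) -> ctx_le (ctx_update k o l) l.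
Proof.
  intros Ho i; rewrite nth_ctx_update.
  destruct (i =? k) eqn:E; [now apply Nat.eqb_eq in E as -> | apply opt_le_refl].
Qed.

End Refinement.
End Contexts.

Arguments opt_meet {X}.
Arguments meet_with {X}.
Arguments ctx_meet {X}.
Arguments ctx_insert {X}.
Arguments ctx_update {X}.
Arguments ctx_delete {X}.
Arguments opt_le {X}.
Arguments ctx_le {X}.

#[local] Hint Resolve leD_refl leC_refl leD_andl leD_andr leC_andl leC_andr : ctx.
#[local] Hint Resolve ctx_le_refl ctx_meet_le_l ctx_meet_le_r ctx_le_cons ctx_le_insert
  ctx_le_update opt_le_refl opt_meet_le_l opt_meet_le_r opt_le_None : ctx.

Lemma typ_weaken G M d D : typ G M d D ->
  forall G' D', ctx_le leD G' G -> ctx_le leC D' D -> typ G' M d D'.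
Proof.
  induction 1 as [G D x d Hx|G D M d ko _ IH|G D M N d ko _ IHM _ IHN
                 |G D M b k k' Hb _ IH|G D M k _ IH|G D M d d' _ IH Hle|G D M d d' _ IH _ IH'];
    intros G' D' HG HD.
  - destruct (HG x d Hx) as [d' [Hx' Hle]]; eapply t_le; [apply t_ax|]; eauto.
  - apply t_abs, IH; eauto with ctx.
  - eapply t_app; eauto.
  - destruct (HD b k' Hb) as [k'' [Hb' Hle]].
    eapply t_mu1; [exact Hb'|]. eapply t_le; [apply IH|]; eauto with ctx.
    now apply leD_arr.
  - apply t_mu2, IH; eauto with ctx.
  - eapply t_le; eauto.
  - apply t_and; eauto.
Qed.

Fixpoint has_arrow (k : tC) (d : tD) : Prop :=
  match d with
  | KArr k0 => leC k k0
  | DAnd d1 d2 => has_arrow k d1 \/ has_arrow k d2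
  | _ => False
  end.

Lemma has_arrow_le d e : leD d e -> forall k, has_arrow k e -> has_arrow k d.
Proof.
  induction 1; simpl; intros; try tauto.
  - eauto.
  - destruct H1; eauto.
  - eapply leC_trans; eauto.
Qed.

Lemma typ_app_has_arrow G A B d D k : typ G (App A B) d D -> has_arrow k d ->
  exists d0 k0, typ G A (KArr (Pair d0 k0)) D /\ typ G B d0 D /\ leC k k0.
Proof.
  intro H; remember (App A B) as T eqn:ET; revert k.
  induction H; intros k0 Hk; try discriminate.
  - injection ET as -> ->. destruct ko; simpl in Hk; [eauto | tauto].
  - eapply IHtyp; eauto using has_arrow_le.
  - destruct Hk; eauto.
Qed.

Lemma typ_app_inv G A B k D : typ G (App A B) (KArr k) D ->
  exists d0, typ G A (KArr (Pair d0 k)) D /\ typ G B d0 D.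
Proof.
  intro H. destruct (typ_app_has_arrow _ _ _ _ _ k H (leC_refl k)) as [d0 [k0 [HA [HB Hk]]]].
  exists d0; split; auto.
  eapply t_le; [exact HA|]. apply leD_arr, leC_Pair; auto with ctx.
Qed.

Lemma typ_unlift_t G N j d D : typ G (lift_t j N) d D -> typ (ctx_delete j G) N d D.
Proof.
  intro H; remember (lift_t j N) as T eqn:ET; revert j N ET.
  induction H; intros j N0 ET; try (destruct N0; try discriminate; injection ET as; subst).
  - apply t_ax. rewrite nth_ctx_delete. now destruct (n <? j).
  - apply t_abs. now apply (IHtyp (S j)).
  - eapply t_app; eauto.
  - eapply t_mu1; eauto.
  - eapply t_mu2; eauto.
  - eapply t_le; eauto.
  - apply t_and; eauto.
Qed.

Lemma typ_unlift_n G N j d D : typ G (lift_n j N) d D -> typ G N d (ctx_delete j D).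
Proof.
  intro H; remember (lift_n j N) as T eqn:ET; revert j N ET.
  induction H; intros j N0 ET; try (destruct N0; try discriminate; injection ET as; subst).
  - now apply t_ax.
  - apply t_abs; eauto.
  - eapply t_app; eauto.
  - rename H1 into Eb. specialize (IHtyp (S j) N0 eq_refl).
    destruct n as [|b']; [discriminate|].
    change (S b' <? S j) with (b' <? j) in Eb.
    destruct (b' <? j) eqn:Hb; injection Eb as ->;
      (eapply t_mu1; [rewrite nth_ctx_delete, Hb|]; eauto).
  - destruct n as [|b']; [|now destruct (S b' <? S j)].
    apply t_mu2, (IHtyp (S j)); reflexivity.
  - eapply t_le; eauto.
  - apply t_and; eauto.
Qed.

Definition has_opt_type G N (o : option tD) D : Prop :=
  forall dN, o = Some dN -> typ G N dN D.

Lemma has_opt_type_meet G N o1 o2 D :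
  has_opt_type G N o1 D -> has_opt_type G N o2 D -> has_opt_type G N (opt_meet DAnd o1 o2) D.
Proof.
  destruct o1, o2; simpl; intros H1 H2 dN [= <-]; auto using t_and.
Qed.

Lemma typ_meet_with G N o d D :
  has_opt_type G N o D -> typ G N d D -> typ G N (meet_with DAnd o d) D.
Proof. destruct o; simpl; auto using t_and. Qed.

Lemma has_opt_type_unlift_t G N o d D :
  has_opt_type (Some d :: G) (lift_t 0 N) o D -> has_opt_type G N o D.
Proof. intros H dN Ho; exact (typ_unlift_t _ _ 0 _ _ (H dN Ho)). Qed.

Lemma has_opt_type_unlift_n G N o k D :
  has_opt_type G (lift_n 0 N) o (k :: D) -> has_opt_type G N o D.
Proof. intros H dN Ho; exact (typ_unlift_n _ _ 0 _ _ (H dN Ho)). Qed.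

(* A typing of [M[N/k]] comes from one of [M] in which [k] is typed by [o], a
   (possibly absent) type of [N]. *)
Definition typ_before_subst M k N G d D : Prop :=
  exists o, typ (ctx_insert k o G) M d D /\ has_opt_type G N o D.

Lemma typ_before_subst_le M k N G d d' D :
  typ_before_subst M k N G d D -> leD d d' -> typ_before_subst M k N G d' D.
Proof. intros [o [HM HN]] Hle; exists o; split; eauto using t_le. Qed.

Lemma typ_before_subst_and M k N G d d' D :
  typ_before_subst M k N G d D -> typ_before_subst M k N G d' D ->
  typ_before_subst M k N G (DAnd d d') D.
Proof.
  intros [o1 [HM1 HN1]] [o2 [HM2 HN2]].
  exists (opt_meet DAnd o1 o2); split; [|auto using has_opt_type_meet].
  apply t_and; eapply typ_weaken; eauto with ctx.
Qed.

Lemma typ_subst_inv M k N G d D :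
  typ G (subst_t k N M) d D -> typ_before_subst M k N G d D.
Proof.
  revert k N G d D.
  induction M as [n|M IH|M1 IH1 M2 IH2|b M IH]; intros k N G d D H;
    remember (subst_t k N _) as T eqn:ET.
  - destruct (n =? k) eqn:Enk.
    + apply Nat.eqb_eq in Enk as ->. simpl in ET; rewrite Nat.eqb_refl in ET; subst T.
      exists (Some d); split; [|now intros dN [= <-]].
      apply t_ax. now rewrite nth_ctx_insert, Nat.ltb_irrefl, Nat.eqb_refl.
    + simpl in ET; rewrite Enk in ET.
      induction H; try (destruct (n <? k); discriminate);
        eauto using typ_before_subst_le, typ_before_subst_and.
      exists None; split; [|discriminate].
      apply t_ax. rewrite nth_ctx_insert, Enk.
      destruct (n <? k); now injection ET as ->.
  - induction H; simpl in ET; try discriminate;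
      eauto using typ_before_subst_le, typ_before_subst_and.
    injection ET as ->. destruct (IH _ _ _ _ _ H) as [o [HM HN]].
    exists o; split; [now apply t_abs|].
    now apply has_opt_type_unlift_t in HN.
  - induction H; simpl in ET; try discriminate;
      eauto using typ_before_subst_le, typ_before_subst_and.
    injection ET as -> ->.
    destruct (IH1 _ _ _ _ _ H) as [o1 [HM1 HN1]], (IH2 _ _ _ _ _ H0) as [o2 [HM2 HN2]].
    exists (opt_meet DAnd o1 o2); split; [|auto using has_opt_type_meet].
    eapply t_app; eapply typ_weaken; eauto with ctx.
  - induction H; simpl in ET; try discriminate;
      eauto using typ_before_subst_le, typ_before_subst_and.
    + injection ET as <- ->. destruct (IH _ _ _ _ _ H0) as [o [HM HN]].
      exists o; split; [eapply t_mu1; eauto|].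
      now apply has_opt_type_unlift_n in HN.
    + injection ET as <- ->. destruct (IH _ _ _ _ _ H) as [o [HM HN]].
      exists o; split; [now apply t_mu2|].
      now apply has_opt_type_unlift_n in HN.
Qed.

Definition push_arg (o : option tD) (e : option tC) : option tC :=
  match o, e with Some a, Some k => Some (Pair a k) | _, _ => None end.

Lemma push_arg_le o' o e : opt_le leD o' o -> opt_le leC (push_arg o' e) (push_arg o e).
Proof.
  intros Ho; destruct o as [a|], e as [k|]; simpl; try apply opt_le_None.
  destruct (Ho a eq_refl) as [a' [-> Ha]]. apply opt_le_Some, leC_Pair; auto with ctx.
Qed.

(* A typing of [M[j <= N]] comes from one of [M] in which the continuation [j]
   additionally receives an argument of type [o], a (possibly absent) type of [N]. *)
Definition typ_before_ssubst M j N G d D : Prop :=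
  exists o, typ G M d (ctx_update j (push_arg o (nth j D None)) D) /\ has_opt_type G N o D.

Lemma typ_before_ssubst_le M j N G d d' D :
  typ_before_ssubst M j N G d D -> leD d d' -> typ_before_ssubst M j N G d' D.
Proof. intros [o [HM HN]] Hle; exists o; split; eauto using t_le. Qed.

Lemma typ_before_ssubst_and M j N G d d' D :
  typ_before_ssubst M j N G d D -> typ_before_ssubst M j N G d' D ->
  typ_before_ssubst M j N G (DAnd d d') D.
Proof.
  intros [o1 [HM1 HN1]] [o2 [HM2 HN2]].
  exists (opt_meet DAnd o1 o2); split; [|auto using has_opt_type_meet].
  apply t_and; eapply typ_weaken; eauto using push_arg_le with ctx.
Qed.

(* [App (P[j <= N]) N] is the shape the structural rule creates at the command [j]. *)
Lemma typ_app_ssubst_inv G M N j k D :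
  (forall d, typ G (ssubst j N M) d D -> typ_before_ssubst M j N G d D) ->
  nth j D None = Some k -> typ G (App (ssubst j N M) N) (KArr k) D ->
  exists dN, typ G M (KArr (Pair dN k)) (ctx_update j (Some (Pair dN k)) D) /\ typ G N dN D.
Proof.
  intros Hinv Hj H.
  destruct (typ_app_inv _ _ _ _ _ H) as [d0 [HP HN]].
  destruct (Hinv _ HP) as [o [HM Ho]]. rewrite Hj in HM.
  exists (meet_with DAnd o d0); split; [|now apply typ_meet_with].
  eapply t_le; [eapply typ_weaken; [exact HM|apply ctx_le_refl, leD_refl|]|].
  - apply ctx_le_update; auto with ctx.
    apply (push_arg_le (Some _) o (Some k)), meet_with_opt_le, leD_andl.
  - apply leD_arr, leC_Pair; [apply meet_with_le; auto with ctx | apply leC_refl].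
Qed.

Lemma typ_ssubst_inv M j N G d D :
  typ G (ssubst j N M) d D -> typ_before_ssubst M j N G d D.
Proof.
  revert j N G d D.
  induction M as [n|M IH|M1 IH1 M2 IH2|b M IH]; intros j N G d D H;
    remember (ssubst j N _) as T eqn:ET; simpl in ET;
    [| | | destruct (b =? S j) eqn:Eb];
    induction H; try discriminate;
    eauto using typ_before_ssubst_le, typ_before_ssubst_and.
  - exists None; split; [|discriminate].
    injection ET as ->. now apply t_ax.
  - injection ET as ->. destruct (IH _ _ _ _ _ H) as [o [HM HN]].
    exists o; split; [now apply t_abs|].
    now apply has_opt_type_unlift_t in HN.
  - injection ET as -> ->.
    destruct (IH1 _ _ _ _ _ H) as [o1 [HM1 HN1]], (IH2 _ _ _ _ _ H0) as [o2 [HM2 HN2]].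
    exists (opt_meet DAnd o1 o2); split; [|auto using has_opt_type_meet].
    eapply t_app; eapply typ_weaken; eauto using push_arg_le with ctx.
  - injection ET as <- ->. apply Nat.eqb_eq in Eb; injection Eb as ->.
    destruct (typ_app_ssubst_inv _ _ _ (S j) _ (Some k :: D) (fun d => IH _ _ _ d _) H H0)
      as [dN [HM HN]].
    exists (Some dN); split.
    + rewrite H. eapply t_mu1; [|exact HM]. now rewrite nth_ctx_update, Nat.eqb_refl.
    + intros ? [= <-]. exact (typ_unlift_n _ _ 0 _ _ HN).
  - now injection ET as <- ->.
  - injection ET as <- ->. destruct (IH _ _ _ _ _ H0) as [o [HM HN]].
    exists o; split; [|now apply has_opt_type_unlift_n in HN].
    eapply t_mu1; [|exact HM]. rewrite nth_ctx_update.
    change (S b0 =? S j) with (b0 =? j) in Eb. now rewrite Eb.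
  - injection ET as <- ->. destruct (IH _ _ _ _ _ H) as [o [HM HN]].
    exists o; split; [now apply t_mu2|now apply has_opt_type_unlift_n in HN].
Qed.

Definition typable N : Prop := exists G D d, typ G N d D.

Definition typ_refining G M d D : Prop :=
  exists G' D', ctx_le leD G' G /\ ctx_le leC D' D /\ typ G' M d D'.

Lemma typ_refining_of_typ G M d D : typ G M d D -> typ_refining G M d D.
Proof. intro H; exists G, D; auto with ctx. Qed.

Lemma typ_refining_le G M d d' D : typ_refining G M d D -> leD d d' -> typ_refining G M d' D.
Proof. intros [G' [D' [HG [HD H]]]] Hle; exists G', D'; eauto using t_le. Qed.

Lemma typ_refining_and G M d d' D :
  typ_refining G M d D -> typ_refining G M d' D -> typ_refining G M (DAnd d d') D.
Proof.
  intros [G1 [D1 [HG1 [HD1 H1]]]] [G2 [D2 [HG2 [HD2 H2]]]].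
  exists (ctx_meet DAnd G1 G2), (ctx_meet CAnd D1 D2); repeat split.
  - apply (ctx_le_trans _ _ leD_trans _ G1); auto with ctx.
  - apply (ctx_le_trans _ _ leC_trans _ D1); auto with ctx.
  - apply t_and; eapply typ_weaken; eauto with ctx.
Qed.

(* When the argument [N] is erased by the contraction, it is typed on its own
   and the two derivations are combined in the meet of their contexts. *)
Lemma typ_refining_app_erased G F N d ko D G2 D2 :
  (forall G' D', ctx_le leD G' G -> ctx_le leC D' D -> typ G' F (KArr (times d ko)) D') ->
  typ G2 N d D2 -> typ_refining G (App F N) (arr ko) D.
Proof.
  intros HF HN. exists (ctx_meet DAnd G G2), (ctx_meet CAnd D D2); repeat split; auto with ctx.
  eapply t_app; [apply HF|eapply typ_weaken]; eauto with ctx.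
Qed.

Lemma typ_refining_beta_arr M N G ko D :
  typ G (subst_t 0 N M) (arr ko) D -> typable N -> typ_refining G (App (Lam M) N) (arr ko) D.
Proof.
  intros H [G2 [D2 [dN HN]]].
  destruct (typ_subst_inv _ _ _ _ _ _ H) as [[dx|] [HM Hx]]; simpl in HM.
  - apply typ_refining_of_typ. eapply t_app; [apply t_abs, HM | now apply Hx].
  - apply (typ_refining_app_erased _ _ _ dN _ _ G2 D2); auto.
    intros G' D' HG HD. apply t_abs. eapply typ_weaken; eauto with ctx.
Qed.

Lemma typ_refining_beta M N G d D :
  typ G (subst_t 0 N M) d D -> typable N -> typ_refining G (App (Lam M) N) d D.
Proof.
  revert G D; induction d as [| |k|d1 IH1 d2 IH2]; intros G D H HN.
  - eapply typ_refining_le; [apply (typ_refining_beta_arr _ _ _ None); auto|apply leD_om_nu].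
    eapply t_le; [exact H|apply leD_nu_om].
  - now apply (typ_refining_beta_arr _ _ _ None).
  - now apply (typ_refining_beta_arr _ _ _ (Some k)).
  - apply typ_refining_and; [apply IH1|apply IH2]; eauto using t_le with ctx.
Qed.

Definition mu_contract b P N : term :=
  let N' := lift_n 0 N in
  let P' := ssubst 0 N' P in
  if b =? 0 then Mu b (App P' N') else Mu b P'.

Lemma typ_refining_mu b P N G d D :
  typ G (mu_contract b P N) d D -> typable N -> typ_refining G (App (Mu b P) N) d D.
Proof.
  intros H [G2 [D2 [dN HN]]].
  remember (mu_contract b P N) as T eqn:ET; unfold mu_contract in ET.
  destruct b as [|b]; simpl in ET;
    induction H; try discriminate; eauto using typ_refining_le, typ_refining_and.
  - injection ET as ->.
    destruct (typ_app_ssubst_inv _ _ _ 0 _ (Some k :: D)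
                (fun d => typ_ssubst_inv P 0 _ G d _) eq_refl H) as [dx [HP Hx]].
    apply typ_refining_of_typ. apply (t_app _ _ _ _ dx (Some k)).
    + now apply t_mu2.
    + exact (typ_unlift_n _ _ 0 _ _ Hx).
  - injection ET as <- ->.
    destruct (typ_ssubst_inv _ _ _ _ _ _ H0) as [[dx|] [HP Hx]]; simpl in HP.
    + apply typ_refining_of_typ. apply (t_app _ _ _ _ dx (Some k)).
      * eapply t_mu1; eauto.
      * exact (typ_unlift_n _ _ 0 _ _ (Hx _ eq_refl)).
    + apply (typ_refining_app_erased _ _ _ dN (Some k) _ G2 D2); auto.
      intros G' D' HG HD. eapply typ_weaken; [eapply t_mu1|..]; eauto.
      eapply typ_weaken; eauto with ctx.
Qed.

Inductive head_step : term -> term -> term -> Prop :=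
| hs_beta M N : head_step (App (Lam M) N) (subst_t 0 N M) N
| hs_mu b P N : head_step (App (Mu b P) N) (mu_contract b P N) N
| hs_app A A' B N : head_step A A' N -> head_step (App A B) (App A' B) N.

Lemma head_step_step X R N : head_step X R N -> step X R.
Proof. induction 1; [apply st_beta | apply st_mu | now apply st_appl]. Qed.

Lemma typ_refining_head_expansion X R N G d D :
  head_step X R N -> typable N -> typ G R d D -> typ_refining G X d D.
Proof.
  intros Hs HN; revert G d D.
  induction Hs as [M N|b P N|A A' B N _ IHs]; intros G d D H.
  - now apply typ_refining_beta.
  - now apply typ_refining_mu.
  - remember (App A' B) as T eqn:ET.
    induction H; try discriminate; eauto using typ_refining_le, typ_refining_and.
    injection ET as -> ->.
    destruct (IHs HN _ _ _ H) as [G' [D' [HG [HD HA]]]].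
    exists G', D'; repeat split; auto.
    eapply t_app; [exact HA|eapply typ_weaken; eauto].
Qed.

Inductive immediate_subterm : term -> term -> Prop :=
| is_lam M : immediate_subterm M (Lam M)
| is_appl A B : immediate_subterm A (App A B)
| is_appr A B : immediate_subterm B (App A B)
| is_mu b M : immediate_subterm M (Mu b M).

Inductive subterm : term -> term -> Prop :=
| sub_refl M : subterm M M
| sub_lam y M : subterm y M -> subterm y (Lam M)
| sub_appl y A B : subterm y A -> subterm y (App A B)
| sub_appr y A B : subterm y B -> subterm y (App A B)
| sub_mu y b M : subterm y M -> subterm y (Mu b M).

Definition subterm_or_reduct x y : Prop := step y x \/ immediate_subterm x y.

Lemma subterm_immediate z y M : immediate_subterm z y -> subterm y M -> subterm z M.
Proof.
  intros Hz; induction 1; auto using subterm.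
  destruct Hz; auto using subterm.
Qed.

Lemma subterm_step y M z : subterm y M -> step y z -> exists M', step M M' /\ subterm z M'.
Proof.
  induction 1; intro Hs; [exists z; split; [exact Hs|constructor]|..];
    destruct (IHsubterm Hs) as [M' [HM' Hz]]; eexists; split; eauto using step, subterm.
Qed.

Lemma Acc_subterm_or_reduct M : Acc (transp _ step) M ->
  forall y, subterm y M -> Acc subterm_or_reduct y.
Proof.
  induction 1 as [M _ IH]. intro y; induction y; intro Hy; constructor;
    intros z [Hs|Hz].
  all: try (destruct (subterm_step _ _ _ Hy Hs) as [M' [HM' Hz]]; eapply IH; eauto).
  all: inversion Hz; subst; eauto using subterm_immediate.
Qed.

Lemma SN_Acc M : SN M -> Acc (transp _ step) M.
Proof.
  intro HSN. apply NNPP; intro HM. apply HSN.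
  assert (Hnext : forall x : {x | ~ Acc (transp _ step) x},
             {y : {y | ~ Acc (transp _ step) y} | step (proj1_sig x) (proj1_sig y)}).
  { intros [x Hx]. apply constructive_indefinite_description.
    apply NNPP; intro Hno. apply Hx; constructor; intros y Hy.
    apply NNPP; intro Hy'. apply Hno. now exists (exist _ y Hy'). }
  exists (fun n => proj1_sig (Nat.iter n (fun x => proj1_sig (Hnext x)) (exist _ M HM))).
  split; [reflexivity|]. intro n. exact (proj2_sig (Hnext _)).
Qed.

Fixpoint neutral M : Prop :=
  match M with Var _ => True | App A _ => neutral A | _ => False end.

Lemma head_step_of_not_neutral A B : ~ neutral A -> exists R N, head_step (App A B) R N.
Proof.
  revert B; induction A as [| |A1 IH A2 _|]; intros B HA; simpl in HA.
  - tauto.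
  - eexists; eexists; apply hs_beta.
  - destruct (IH A2 HA) as [R [N Hs]]. eexists; eexists; apply hs_app, Hs.
  - eexists; eexists; apply hs_mu.
Qed.

Lemma head_step_arg X R N : head_step X R N -> clos_trans _ subterm_or_reduct N X.
Proof.
  induction 1; [| |eapply t_trans; [eassumption|]]; apply t_step; right; constructor.
Qed.

(* The induction hypothesis: [M] has an arrow type, and a neutral [M] has every
   arrow type, so that it can be applied to any typable argument. *)
Definition arrow_typable M : Prop :=
  (exists G D k, typ G M (KArr k) D) /\
  (neutral M -> forall ko, exists G D, typ G M (arr ko) D).

Lemma typ_var_any x d D : typ (ctx_update x (Some d) []) (Var x) d D.
Proof. apply t_ax. now rewrite nth_ctx_update, Nat.eqb_refl. Qed.

Lemma typ_lam_intro G M k D : typ G M (KArr k) D ->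
  exists G' d, typ G' (Lam M) (KArr (Pair d k)) D.
Proof.
  intro H. exists (tl G), (meet_with DAnd (nth 0 G None) Nu).
  apply (t_abs _ _ _ _ (Some k)). eapply typ_weaken; [exact H| |auto with ctx].
  apply ctx_le_cons_tl; [apply meet_with_opt_le|]; auto with ctx.
Qed.

Lemma typ_mu_intro G M k D b : typ G M (KArr k) D ->
  exists D' k', typ G (Mu b M) (KArr k') D'.
Proof.
  intro H. destruct b as [|b].
  - exists (tl D), (meet_with CAnd (nth 0 D None) k). apply t_mu2.
    eapply t_le; [eapply typ_weaken; [exact H|auto with ctx|]|].
    + apply ctx_le_cons_tl; [apply meet_with_opt_le|]; auto with ctx.
    + apply leD_arr, meet_with_le; auto with ctx.
  - set (kb := meet_with CAnd (nth b (tl D) None) k).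
    exists (ctx_update b (Some kb) (tl D)), (meet_with CAnd (nth 0 D None) (PairO Nu)).
    eapply t_mu1; [now rewrite nth_ctx_update, Nat.eqb_refl|].
    eapply t_le; [eapply typ_weaken; [exact H|auto with ctx|]|].
    + apply ctx_le_cons_tl; [apply meet_with_opt_le; auto with ctx|].
      apply ctx_le_update_nth, meet_with_opt_le; auto with ctx.
    + apply leD_arr, meet_with_le; auto with ctx.
Qed.

Lemma arrow_typable_of_Acc M : Acc (clos_trans _ subterm_or_reduct) M -> arrow_typable M.
Proof.
  induction 1 as [M _ IH].
  assert (IHsub : forall y, immediate_subterm y M -> arrow_typable y)
    by (intros y Hy; apply IH, t_step; now right).
  destruct M as [x|M|A B|b M].
  - split; [|intros _ ko; exists (ctx_update x (Some (arr ko)) []), []; apply typ_var_any].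
    exists (ctx_update x (Some (KArr (PairO Nu))) []), [], (PairO Nu); apply typ_var_any.
  - split; [|contradiction].
    destruct (IHsub M (is_lam M)) as [[G [D [k H]]] _].
    destruct (typ_lam_intro _ _ _ _ H) as [G' [d H']]; eauto.
  - destruct (IHsub A (is_appl A B)) as [_ HA].
    destruct (IHsub B (is_appr A B)) as [[GB [DB [kB HB]]] _].
    destruct (classic (neutral A)) as [Hneutral|Hneutral].
    + assert (Happ : forall ko, exists G D, typ G (App A B) (arr ko) D).
      { intro ko. destruct (HA Hneutral (Some (times (KArr kB) ko))) as [GA [DA HA']].
        exists (ctx_meet DAnd GA GB), (ctx_meet CAnd DA DB).
        eapply t_app; eapply typ_weaken; eauto with ctx. }
      split; [|intros; apply Happ].
      destruct (Happ (Some (PairO Nu))) as [G [D H]]; eauto.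
    + split; [|contradiction].
      destruct (head_step_of_not_neutral A B Hneutral) as [R [N Hs]].
      destruct (IH R (t_step _ _ _ _ (or_introl (head_step_step _ _ _ Hs))))
        as [[GR [DR [kR HR]]] _].
      assert (HN : typable N).
      { destruct (IH N (head_step_arg _ _ _ Hs)) as [[GN [DN [kN HN]]] _].
        now exists GN, DN, (KArr kN). }
      destruct (typ_refining_head_expansion _ _ _ _ _ _ Hs HN HR) as [G' [D' [_ [_ H']]]].
      eauto.
  - split; [|contradiction].
    destruct (IHsub M (is_mu b M)) as [[G [D [k H]]] _].
    destruct (typ_mu_intro _ _ _ _ b H) as [D' [k' H']]; eauto.
Qed.

Theorem mainTheorem2 : forall M : term, SN M ->
  exists (G : basis) (D : nctx) (d : tD), typ G M d D.
Proof.
  intros M HSN.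
  assert (HAcc : Acc subterm_or_reduct M)
    by exact (Acc_subterm_or_reduct M (SN_Acc M HSN) M (sub_refl M)).
  destruct (arrow_typable_of_Acc M (Acc_clos_trans _ _ _ HAcc)) as [[G [D [k H]]] _].
  now exists G, D, (KArr k).
Qed.
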